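(* Let $d\ge 1$. Let $\mathbf{s}\in\mathbb{R}^d$ be a latent source vector and $\mathbf{u}$ an auxiliary variable, and suppose the conditional density of $\mathbf{s}$ given $\mathbf{u}$ is the contaminated density $$p(\mathbf{s}|\mathbf{u})=(1-\epsilon(\mathbf{u}))\,p^{\star}(\mathbf{s}|\mathbf{u})+\epsilon(\mathbf{u})\,\delta(\mathbf{s}|\mathbf{u}),\qquad \epsilon(\mathbf{u})\in[0,1),$$ where $p^{\star}$ is the target density and $\delta$ the outlier density. Assume: (A1) the data are $\mathbf{x}=\mathbf{f}(\mathbf{s})$ with $\mathbf{f}:\mathbb{R}^d\to\mathbb{R}^d$ smooth and invertible; (A2) $p^{\star}(\mathbf{s}|\mathbf{u})$ is conditionally independent and belongs to the exponential family $$\log p^{\star}(\mathbf{s}|\mathbf{u})=\sum_{j=1}^{d}\lambda_j(\mathbf{u})q_j(s_j)+\lambda_0(\mathbf{u})-\log Z(\boldsymbol{\lambda}(\mathbf{u})),$$ with scalar functions $q_j$, parameters $\lambda_j(\mathbf{u})$ and partition function $Z$; (A3) for all $\mathbf{s},\mathbf{u}$ the ratio $\delta(\mathbf{s}|\mathbf{u})/p^{\star}(\mathbf{s}|\mathbf{u})$ is finite; (A4) (in the limit of infinite data) the conditional density $p(\mathbf{x}|\mathbf{u})$ of $\mathbf{x}$ given $\mathbf{u}$ satisfies $$\log\frac{p(\mathbf{x}|\mathbf{u})}{c(\mathbf{x})e(\mathbf{u})}=\mathbf{w}(\mathbf{u})^{\top}\mathbf{h}(\mathbf{x})$$ for some vector-valued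 functions $\mathbf{w}(\mathbf{u})=(w_1(\mathbf{u}),\dots,w_d(\mathbf{u}))^\top$, $\mathbf{h}(\mathbf{x})=(h_1(\mathbf{x}),\dots,h_d(\mathbf{x}))^\top$ and scalar functions $c,e$; (A5) there exist $m+1$ points $\mathbf{u}_0,\mathbf{u}_1,\dots,\mathbf{u}_m$ such that the $d\times d$ matrices $\bar{\boldsymbol{\Lambda}}:=\sum_{i=1}^m\bar{\boldsymbol{\lambda}}(\mathbf{u}_i)\bar{\boldsymbol{\lambda}}(\mathbf{u}_i)^{\top}$ and $\sum_{i=1}^m\bar{\mathbf{w}}(\mathbf{u}_i)\bar{\boldsymbol{\lambda}}(\mathbf{u}_i)^{\top}$ are invertible, where $\bar{\boldsymbol{\lambda}}(\mathbf{u}):=\boldsymbol{\lambda}(\mathbf{u})-\boldsymbol{\lambda}(\mathbf{u}_0)$ and $\bar{\mathbf{w}}(\mathbf{u}):=\mathbf{w}(\mathbf{u})-\mathbf{w}(\mathbf{u}_0)$. Then, for $\epsilon(\mathbf{u})$ sufficiently small for all $\mathbf{u}$ (in the limit of infinite data), there exist an invertible $d\times d$ matrix $\mathbf{A}$ and a vector $\boldsymbol{\alpha}\in\mathbb{R}^d$ such that $$\mathbf{q}(\mathbf{s})+\mathbf{r}(\mathbf{s})=\mathbf{A}\mathbf{h}(\mathbf{x})+\boldsymbol{\alpha},$$ where $\mathbf{q}(\mathbf{s})=(q_1(s_1),\dots,q_d(s_d))^\top$ and, with $\bar{\boldsymbol{\omega}}(\mathbf{u}):=\bar{\boldsymbol{\Lambda}}^{-1}\bar{\boldsymbol{\lambda}}(\mathbf{u})$,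 $\mathbf{1}_d=(1,\dots,1)^\top$ and $\epsilon_{\max}:=\max_{i=0,1,\dots,m}\epsilon(\mathbf{u}_i)$, $$\mathbf{r}(\mathbf{s})=\sum_{i=1}^m\left\{\epsilon(\mathbf{u}_i)\frac{\delta(\mathbf{s}|\mathbf{u}_i)}{p^{\star}(\mathbf{s}|\mathbf{u}_i)}-\epsilon(\mathbf{u}_0)\frac{\delta(\mathbf{s}|\mathbf{u}_0)}{p^{\star}(\mathbf{s}|\mathbf{u}_0)}\right\}\bar{\boldsymbol{\omega}}(\mathbf{u}_i)+O(\epsilon_{\max}^2)\mathbf{1}_d .$$
   Context: This is a nonlinear ICA setting: observations $\mathbf{x}$ arise as an invertible nonlinear mixture of sources $\mathbf{s}$, and an auxiliary variable $\mathbf{u}$ (e.g. a time-segment label or past observation) is observed alongside $\mathbf{x}$. The conditional density $p(\mathbf{x}|\mathbf{u})$ is the one induced from the contaminated source density $p(\mathbf{s}|\mathbf{u})$ via $\mathbf{x}=\mathbf{f}(\mathbf{s})$. $O(\epsilon_{\max}^2)$ denotes a term bounded by a constant times $\epsilon_{\max}^2$ as $\epsilon_{\max}\to 0$. *)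

From HB Require Import structures.
From mathcomp Require Import all_boot all_order all_algebra.
From mathcomp Require Import all_classical all_reals all_analysis.
Set Implicit Arguments. Unset Strict Implicit. Unset Printing Implicit Defensive.
Import Order.TTheory GRing.Theory Num.Theory.
Local Open Scope ring_scope.

(* Sources s and observations x live in 'rV[R]_d
   (row vectors, as required by the library's [jacobian]); the parameter
   vectors lambda(u), w(u), h(x), q(s) are column vectors 'cV[R]_d. *)

Definition qvec (R : realType) (d : nat) (q : 'I_d -> R -> R) (s : 'rV[R]_d)
  : 'cV[R]_d := \col_j q j (s ord0 j).

Definition vbar (R : realType) (U : Type) (d : nat) (v : U -> 'cV[R]_d)
  (u0 : U) (u : U) : 'cV[R]_d := v u - v u0.

Definition Lambar (R : realType) (U : Type) (d m : nat) (lam : U -> 'cV[R]_d)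
  (u0 : U) (us : 'I_m -> U) : 'M[R]_d :=
  \sum_(i < m) (vbar lam u0 (us i) *m (vbar lam u0 (us i))^T).

Definition WLambar (R : realType) (U : Type) (d m : nat)
  (w lam : U -> 'cV[R]_d) (u0 : U) (us : 'I_m -> U) : 'M[R]_d :=
  \sum_(i < m) (vbar w u0 (us i) *m (vbar lam u0 (us i))^T).

Definition omegabar (R : realType) (U : Type) (d m : nat) (lam : U -> 'cV[R]_d)
  (u0 : U) (us : 'I_m -> U) (u : U) : 'cV[R]_d :=
  invmx (Lambar lam u0 us) *m vbar lam u0 u.

(* eps_max := max_{i=0..m} eps(u_i)  (eps >= 0, so 0 is a neutral seed) *)
Definition epsmax (R : realType) (U : Type) (m : nat) (eps : U -> R)
  (u0 : U) (us : 'I_m -> U) : R :=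
  Num.max (eps u0) (\big[Num.max/0]_(i < m) eps (us i)).

Definition rlead (R : realType) (U : Type) (d m : nat) (lam : U -> 'cV[R]_d)
  (pstar delta : U -> 'rV[R]_d -> R) (eps : U -> R)
  (u0 : U) (us : 'I_m -> U) (s : 'rV[R]_d) : 'cV[R]_d :=
  \sum_(i < m)
    ((eps (us i) * (delta (us i) s / pstar (us i) s)
      - eps u0 * (delta u0 s / pstar u0 s)) *: omegabar lam u0 us (us i)).

Definition pcont (R : realType) (U : Type) (d : nat)
  (pstar delta : U -> 'rV[R]_d -> R) (eps : U -> R) (u : U) (s : 'rV[R]_d) : R :=
  (1 - eps u) * pstar u s + eps u * delta u s.

From HB Require Import structures.
From mathcomp Require Import all_boot all_order all_algebra.
From mathcomp Require Import all_classical all_reals all_analysis.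
From mathcomp Require Import ring lra.
Set Implicit Arguments. Unset Strict Implicit. Unset Printing Implicit Defensive.
Import Order.TTheory GRing.Theory Num.Theory.
Local Open Scope ring_scope.

(* With [rho = delta / p*] the contaminated density is [p* (1 + eps (rho - 1))],
   so (A2), (A4) and the change of variables give
   [w(u)^T h(f s) = lambda(u)^T q(s) + a(u,s)] for a scalar [a(u,s)] whose only
   dependence on [s], apart from [ln |det J f(s)|] and [ln c(f s)] which cancel
   between two values of [u], is [ln (1 + eps(u) (rho(u,s) - 1))].  Subtracting the identity
   at [u0], multiplying by [lbar(u_i)] and summing over [i] yields
   [WLambar^T h = Lambar q + sum_i (a(u_i) - a(u0)) lbar(u_i)], i.e. [q] is an
   invertible affine image of [h] up to [sum_i (a(u_i) - a(u0)) omegabar(u_i)].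
   For [eps < 1/2] the argument [t = eps (rho - 1)] stays above [-1/2], where
   [ln (1 + t) = t + O(t^2)]; the linear terms are [rlead] and the constants
   go into [alpha]. *)

Lemma ln1D_sub_le (R : realType) (t : R) :
  -1/2 <= t -> `|ln (1 + t) - t| <= 2 * t ^+ 2.
Proof.
move=> t_ge.
have t1_gt0 : 0 < 1 + t by lra.
have ln_le : ln (1 + t) <= t by apply: le_ln1Dx; lra.
set v := (1 + t)^-1.
have v_gt0 : 0 < v by rewrite invr_gt0.
have vK : v * (1 + t) = 1 by rewrite mulVf // gt_eqF.
have ln_ge : 1 - v <= ln (1 + t).
  have := @le_ln1Dx R (v - 1) ltac:(lra).
  by rewrite addrC subrK lnV ?posrE //; lra.
have v_le2 : v <= 2 by nra.
have defv : t - 1 + v = t ^+ 2 * v by nra.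
by rewrite ler_norml; apply/andP; split; nra.
Qed.

Lemma lnM_subl (R : realType) (x y z : R) :
  0 < x * y -> 0 < x * z -> ln (x * y) - ln (x * z) = ln (y / z).
Proof.
move=> xy_gt0 xz_gt0; rewrite -ln_div ?posrE //.
have /andP[x_neq0 z_neq0] : (x != 0) && (z != 0).
  by rewrite -negb_or -mulf_eq0 gt_eqF.
by rewrite -mulf_div divff // mul1r.
Qed.

Definition dotc (R : pzRingType) (d : nat) (a b : 'cV[R]_d) : R :=
  \sum_j a j ord0 * b j ord0.

Lemma mulmx_outer (R : comPzRingType) (d : nat) (a b v : 'cV[R]_d) :
  a *m b^T *m v = dotc b v *: a.
Proof.
apply/matrixP=> k l; rewrite (ord1 l) !mxE mulr_suml; apply: eq_bigr => j _.
by rewrite !mxE big_ord1 !mxE -mulrA mulrC.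
Qed.

Lemma dotcBl (R : pzRingType) (d : nat) (a b v : 'cV[R]_d) :
  dotc (a - b) v = dotc a v - dotc b v.
Proof. by rewrite /dotc -sumrB; apply: eq_bigr => j _; rewrite !mxE mulrBl. Qed.

Lemma ler_norm_sum_scalemx (R : realFieldType) (d m : nat)
    (a B : 'I_m -> R) (v : 'I_m -> 'cV[R]_d) (k : 'I_d) :
    (forall i, `|a i| <= B i) ->
  `|(\sum_i a i *: v i) k ord0| <= \sum_i B i * \sum_j `|v i j ord0|.
Proof.
move=> a_le; rewrite summxE; apply: le_trans (ler_norm_sum _ _ _) _.
apply: ler_sum => i _; rewrite mxE normrM.
apply: ler_pM (normr_ge0 _) (normr_ge0 _) (a_le i) _.
rewrite (bigD1 k) //= lerDl; exact: sumr_ge0.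
Qed.

Lemma le_epsmax (R : realType) (U : Type) (m : nat) (eps : U -> R)
    (u0 : U) (us : 'I_m -> U) :
  eps u0 <= epsmax eps u0 us /\ forall i, eps (us i) <= epsmax eps u0 us.
Proof.
rewrite /epsmax; split=> [|i]; rewrite le_max ?lexx //.
by rewrite (le_bigmax _ (fun i => eps (us i)) i) orbT.
Qed.

Section Demixing.

Variables (R : realType) (U : Type) (d m : nat).
Variables (lam w : U -> 'cV[R]_d) (u0 : U) (us : 'I_m -> U).
Hypothesis Lambar_unit : Lambar lam u0 us \in unitmx.

Lemma demixing (hv qv : 'cV[R]_d) (a : U -> R) :
    (forall u, dotc (w u) hv = dotc (lam u) qv + a u) ->
  invmx (Lambar lam u0 us) *m (WLambar w lam u0 us)^T *m hv
    = qv + \sum_i (a (us i) - a u0) *: omegabar lam u0 us (us i).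
Proof.
move=> wh_lin.
have wbar_lin i : dotc (vbar w u0 (us i)) hv
    = dotc (vbar lam u0 (us i)) qv + (a (us i) - a u0).
  by rewrite /vbar !dotcBl !wh_lin; ring.
have WLT_hv : (WLambar w lam u0 us)^T *m hv
    = Lambar lam u0 us *m qv + \sum_i (a (us i) - a u0) *: vbar lam u0 (us i).
  rewrite /WLambar /Lambar raddf_sum !mulmx_suml -big_split.
  apply: eq_bigr => i _.
  by rewrite /= trmx_mul trmxK !mulmx_outer wbar_lin scalerDl.
rewrite -mulmxA WLT_hv mulmxDr mulKmx // mulmx_sumr; congr (_ + _).
by apply: eq_bigr => i _; rewrite scalemxAr.
Qed.

End Demixing.

Section ContaminatedModel.

Variables (R : realType) (d : nat) (U : Type) (f : 'rV[R]_d -> 'rV[R]_d).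
Variables (q : 'I_d -> R -> R) (lam : U -> 'cV[R]_d) (lam0 : U -> R).
Variables (Z : 'cV[R]_d -> R) (pstar delta : U -> 'rV[R]_d -> R).
Variables (m : nat) (u0 : U) (us : 'I_m -> U).
Variables (eps : U -> R) (px : U -> 'rV[R]_d -> R).
Variables (w : U -> 'cV[R]_d) (h : 'rV[R]_d -> 'cV[R]_d).
Variables (c : 'rV[R]_d -> R) (e : U -> R).

Hypothesis detJ_neq0 : forall s, \det ('J f s) != 0.
Hypothesis pstar_gt0 : forall u s, 0 < pstar u s.
Hypothesis ln_pstar : forall u s, ln (pstar u s)
  = \sum_(j < d) lam u j ord0 * q j (s ord0 j) + lam0 u - ln (Z (lam u)).
Hypothesis delta_ge0 : forall u s, 0 <= delta u s.
Hypothesis eps_ge0 : forall u, 0 <= eps u.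
Hypothesis eps_lt_half : forall u, eps u < 1/2.
Hypothesis px_induced : forall u s,
  px u (f s) = pcont pstar delta eps u s / `|\det ('J f s)|.
Hypothesis px_ratio_gt0 : forall u x, 0 < px u x / (c x * e u).
Hypothesis ln_px_ratio : forall u x,
  ln (px u x / (c x * e u)) = \sum_(j < d) w u j ord0 * h x j ord0.
Hypothesis Lambar_unit : Lambar lam u0 us \in unitmx.
Hypothesis WLambar_unit : WLambar w lam u0 us \in unitmx.

Local Notation rho u s := (delta u s / pstar u s).
Local Notation mix u s := (1 + eps u * (rho u s - 1)).

Lemma mix_gt_half u s : 1/2 < mix u s.
Proof.
have rho_ge0 : 0 <= rho u s by rewrite divr_ge0 // ltW.
have := eps_ge0 u; have := eps_lt_half u; nra.
Qed.

Lemma pcontE u s : pcont pstar delta eps u s = pstar u s * mix u s.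
Proof. by rewrite /pcont; field; rewrite gt_eqF. Qed.

Lemma ln_mix_sub_le u s :
  `|ln (mix u s) - eps u * (rho u s - 1)| <= 2 * (eps u ^+ 2 * (rho u s - 1) ^+ 2).
Proof.
by rewrite -exprMn; apply: ln1D_sub_le; have := mix_gt_half u s; lra.
Qed.

Lemma px_gt0 u s : 0 < px u (f s).
Proof.
have mix_gt0 : 0 < mix u s by have := mix_gt_half u s; lra.
by rewrite px_induced pcontE divr_gt0 ?mulr_gt0 ?normr_gt0.
Qed.

Lemma ce_gt0 u s : 0 < c (f s) * e u.
Proof. by have := px_ratio_gt0 u (f s); rewrite pmulr_rgt0 ?invr_gt0 ?px_gt0. Qed.

Definition log_offset u s := lam0 u - ln (Z (lam u)) + ln (mix u s)
  - ln `|\det ('J f s)| - ln (c (f s) * e u).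

Lemma dotc_w_h u s :
  dotc (w u) (h (f s)) = dotc (lam u) (qvec q s) + log_offset u s.
Proof.
have mix_gt0 : 0 < mix u s by have := mix_gt_half u s; lra.
have dotc_q : dotc (lam u) (qvec q s) = \sum_j lam u j ord0 * q j (s ord0 j).
  by apply: eq_bigr => j _; rewrite mxE.
rewrite dotc_q /dotc -ln_px_ratio ln_div ?posrE ?px_gt0 ?ce_gt0 //.
rewrite px_induced pcontE ln_div ?posrE ?mulr_gt0 ?normr_gt0 //.
by rewrite lnM ?posrE // ln_pstar /log_offset; ring.
Qed.

Definition const_offset i := lam0 (us i) - ln (Z (lam (us i)))
  - (lam0 u0 - ln (Z (lam u0))) - ln (e (us i) / e u0).

Definition ln_mix_err u s := ln (mix u s) - eps u * (rho u s - 1).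

Lemma log_offset_subE s i : log_offset (us i) s - log_offset u0 s
  = const_offset i + eps (us i) * (rho (us i) s - 1) - eps u0 * (rho u0 s - 1)
    + (ln_mix_err (us i) s - ln_mix_err u0 s).
Proof.
rewrite /log_offset /const_offset /ln_mix_err.
rewrite -(lnM_subl (ce_gt0 (us i) s) (ce_gt0 u0 s)); ring.
Qed.

Definition err_bound s := \sum_i 2 * ((rho (us i) s - 1) ^+ 2 + (rho u0 s - 1) ^+ 2)
  * \sum_j `|omegabar lam u0 us (us i) j ord0|.

Lemma ln_mix_err_diff_le s i :
  `|ln_mix_err (us i) s - ln_mix_err u0 s|
    <= 2 * ((rho (us i) s - 1) ^+ 2 + (rho u0 s - 1) ^+ 2) * epsmax eps u0 us ^+ 2.
Proof.
have [M0 Mi] := le_epsmax eps u0 us.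
have sqr_le u : eps u <= epsmax eps u0 us ->
    eps u ^+ 2 * (rho u s - 1) ^+ 2 <= (rho u s - 1) ^+ 2 * epsmax eps u0 us ^+ 2.
  move=> eps_le; rewrite mulrC ler_wpM2l ?sqr_ge0 // ler_sqr ?nnegrE //.
  exact: le_trans (eps_ge0 u) eps_le.
apply: le_trans (ler_normB _ _) _.
have := ln_mix_sub_le (us i) s; have := ln_mix_sub_le u0 s.
have := sqr_le _ (Mi i); have := sqr_le _ M0; rewrite /ln_mix_err; lra.
Qed.

Lemma approx_identifiability : exists (A : 'M[R]_d) (alpha : 'cV[R]_d),
  A \in unitmx /\
  forall (s : 'rV[R]_d) (k : 'I_d),
    `|(A *m h (f s) + alpha - qvec q s - rlead lam pstar delta eps u0 us s) k ord0|
      <= err_bound s * epsmax eps u0 us ^+ 2.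
Proof.
pose om i := omegabar lam u0 us (us i).
exists (invmx (Lambar lam u0 us) *m (WLambar w lam u0 us)^T).
exists (\sum_i (eps (us i) - eps u0 - const_offset i) *: om i).
split; first by rewrite unitmx_mul unitmx_inv Lambar_unit unitmx_tr.
move=> s k.
rewrite (demixing Lambar_unit (dotc_w_h ^~ s)).
under eq_bigr do rewrite log_offset_subE.
have -> : qvec q s + \sum_i (const_offset i + eps (us i) * (rho (us i) s - 1)
      - eps u0 * (rho u0 s - 1) + (ln_mix_err (us i) s - ln_mix_err u0 s)) *: om i
    + \sum_i (eps (us i) - eps u0 - const_offset i) *: om i
    - qvec q s - rlead lam pstar delta eps u0 us s
  = \sum_i (ln_mix_err (us i) s - ln_mix_err u0 s) *: om i.
  rewrite (addrAC _ _ (- qvec q s)) (addrAC (qvec q s)) subrr add0r.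
  rewrite /rlead -!big_split -sumrB /=.
  by apply: eq_bigr => i _; rewrite -!scalerDl -scalerBl; congr (_ *: _); ring.
rewrite /err_bound mulr_suml; under [X in _ <= X]eq_bigr do rewrite mulrAC.
exact: ler_norm_sum_scalemx om k (ln_mix_err_diff_le s).
Qed.

End ContaminatedModel.

Theorem theorem1 (R : realType) (d : nat) (U : Type)
  (f : 'rV[R]_d -> 'rV[R]_d)
  (q : 'I_d -> R -> R) (lam : U -> 'cV[R]_d) (lam0 : U -> R)
  (Z : 'cV[R]_d -> R)
  (pstar delta : U -> 'rV[R]_d -> R)
  (m : nat) (u0 : U) (us : 'I_m -> U) :
  (0 < d)%N ->
  (* (A1) f smooth (here: differentiable, with nonvanishing Jacobian) and invertible *)
  bijective f ->
  (forall s, differentiable f s) ->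
  (forall s, \det ('J f s) != 0) ->
  (* (A2) conditionally independent exponential-family target density *)
  (forall u s, 0 < pstar u s) ->
  (forall u s, ln (pstar u s)
               = \sum_(j < d) lam u j ord0 * q j (s ord0 j) + lam0 u
                 - ln (Z (lam u))) ->
  (* delta is a density (nonnegative); (A3) the ratio delta/p* is a real number *)
  (forall u s, 0 <= delta u s) ->
  (* (A5), first part *)
  Lambar lam u0 us \in unitmx ->
  exists eta : R, 0 < eta /\
  exists C : 'rV[R]_d -> R,
  forall (eps : U -> R) (px : U -> 'rV[R]_d -> R)
         (w : U -> 'cV[R]_d) (h : 'rV[R]_d -> 'cV[R]_d)
         (c : 'rV[R]_d -> R) (e : U -> R),
    (forall u, 0 <= eps u < 1) ->
    (* eps(u) sufficiently small for all u *)
    (forall u, eps u < eta) ->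
    (* p(x|u) is the density induced from p(s|u) by x = f(s) *)
    (forall u s, px u (f s) = pcont pstar delta eps u s / `|\det ('J f s)|) ->
    (* (A4) *)
    (forall u x, 0 < px u x / (c x * e u)) ->
    (forall u x, ln (px u x / (c x * e u))
                 = \sum_(j < d) w u j ord0 * h x j ord0) ->
    (* (A5), second part *)
    WLambar w lam u0 us \in unitmx ->
    exists (A : 'M[R]_d) (alpha : 'cV[R]_d),
      A \in unitmx /\
      forall (s : 'rV[R]_d) (k : 'I_d),
        `|(A *m h (f s) + alpha - qvec q s - rlead lam pstar delta eps u0 us s) k ord0|
          <= C s * epsmax eps u0 us ^+ 2.
Proof.
move=> _ _ _ detJ_neq0 pstar_gt0 ln_pstar delta_ge0 Lambar_unit.
exists (1/2); split; first lra.
exists (err_bound lam pstar delta u0 us).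
move=> eps px w h c e eps_range eps_small px_induced ratio_gt0 ln_ratio WLambar_unit.
have eps_ge0 u : 0 <= eps u by case/andP: (eps_range u).
exact: (approx_identifiability detJ_neq0 pstar_gt0 ln_pstar delta_ge0 eps_ge0
          eps_small px_induced ratio_gt0 ln_ratio Lambar_unit).
Qed.
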